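(* Consider the weighted stochastic block model: there are $r$ latent communities labelled $1,\ldots,r$; each node $i$ is independently assigned a latent community $Z_i$ with $\mathbb{P}(Z_i=z)=p_z>0$ for $z=1,\ldots,r$; each unordered pair of distinct nodes $i\neq j$ carries a real-valued edge weight $X_{i,j}=X_{j,i}$, where, conditional on the community indicators, the edge weights are independent and $X_{i,j}$ has distribution function $F_{z_1,z_2}(x)=\mathbb{P}(X_{i,j}\le x\mid Z_i=z_1,Z_j=z_2)$. For a positive integer $q$ define, for distinct nodes $i,i_1,\ldots,i_q$, $$F_z^q(x_1,\ldots,x_q):=\mathbb{P}(X_{i,i_1}\le x_1,\ X_{i_1,i_2}\le x_2,\ \ldots,\ X_{i_1,i_q}\le x_q\mid Z_i=z),\qquad z=1,\ldots,r.$$ Suppose there exists a finite integer $q$ such that the functions $F_1^q,\ldots,F_r^q$ are linearly independent, and let $q_{\min}$ be the smallest such integer. If $q_{\min}$ is positive, then the weighted stochastic block model (the number of communities $r$, the community distribution $\boldsymbol{p}=(p_1,\ldots,p_r)'$, and the conditional distributions $F_{z_1,z_2}$) is nonparametrically identified from the distribution of the edge weights, up to relabeling of the latent communities.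
   Context: ''Nonparametrically identified up to relabeling'' means that any two weighted stochastic block models satisfying the assumptions and inducing the same joint distribution of observed edge weights (on sufficiently many nodes) have the same $r$ and have $(\boldsymbol{p},\{F_{z_1,z_2}\})$ equal up to a single permutation of the community labels, with no parametric restrictions imposed on the $F_{z_1,z_2}$. *)

From HB Require Import structures.
From mathcomp Require Import all_boot all_order all_algebra.
From mathcomp Require Import all_classical all_reals all_analysis.
Set Implicit Arguments. Unset Strict Implicit. Unset Printing Implicit Defensive.
Import Order.TTheory GRing.Theory Num.Theory.
Import numFieldNormedType.Exports.
Local Open Scope classical_set_scope.
Local Open Scope ring_scope.

Definition is_cdf (R : realType) (f : R -> R) : Prop :=
  [/\ {homo f : x y / x <= y},
      (forall y : R, f x @[x --> y^'+] --> f y),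
      f x @[x --> -oo] --> (0 : R) &
      f x @[x --> +oo] --> (1 : R)].

Definition is_wsbm (R : realType) (r : nat) (p : 'I_r -> R)
    (F : 'I_r -> 'I_r -> R -> R) : Prop :=
  [/\ (forall z, 0 < p z),
      \sum_(z < r) p z = 1,
      (forall z1 z2, is_cdf (F z1 z2)) &
      (forall z1 z2, F z1 z2 = F z2 z1)].

(* Joint CDF of the edge weights (X_{i,j})_{i<j} of a network with n nodes:
   P(X_{i,j} <= x i j for all i < j)
   = sum_z prod_i p_{z_i} prod_{i<j} F_{z_i,z_j}(x i j).
   (Only the entries x i j with i < j are used.) *)
Definition edge_cdf (R : realType) (r : nat) (p : 'I_r -> R)
    (F : 'I_r -> 'I_r -> R -> R) (n : nat) (x : 'I_n -> 'I_n -> R) : R :=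
  \sum_(z : {ffun 'I_n -> 'I_r})
     ((\prod_(i < n) p (z i)) *
      \prod_(i < n) \prod_(j < n | (i < j)%N) F (z i) (z j) (x i j)).

(* F_z^q(x_1,...,x_q) = P(X_{i,i1} <= x_1, X_{i1,i2} <= x_2, ..., X_{i1,iq} <= x_q | Z_i = z)
   for distinct nodes i, i1, ..., iq, written with q = q'.+1; the nodes
   i1,...,iq are indexed by 'I_q (ord0 = i1) and w are their communities.
   Computed by the law of total probability over the communities of i1..iq. *)
Definition Fq (R : realType) (r : nat) (p : 'I_r -> R)
    (F : 'I_r -> 'I_r -> R -> R) (q' : nat) (z : 'I_r) (x : 'I_q'.+1 -> R) : R :=
  \sum_(w : {ffun 'I_q'.+1 -> 'I_r})
     ((\prod_(k < q'.+1) p (w k)) *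
      (F z (w ord0) (x ord0) *
       \prod_(k < q'.+1 | (0 < k)%N) F (w ord0) (w k) (x k))).

Definition Fq_lin_indep (R : realType) (r : nat) (p : 'I_r -> R)
    (F : 'I_r -> 'I_r -> R -> R) (q' : nat) : Prop :=
  forall c : 'I_r -> R,
    (forall x : 'I_q'.+1 -> R, \sum_(z < r) c z * Fq p F z x = 0) ->
    forall z, c z = 0.

(* The assumptions of the proposition: a WSBM for which some finite q >= 1
   makes F_1^q..F_r^q linearly independent (so q_min exists and is positive). *)
Definition wsbm_assumptions (R : realType) (r : nat) (p : 'I_r -> R)
    (F : 'I_r -> 'I_r -> R -> R) : Prop :=
  is_wsbm p F /\ exists q' : nat, Fq_lin_indep p F q'.

From HB Require Import structures.
From mathcomp Require Import all_boot all_order all_algebra.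
From mathcomp Require Import all_classical all_reals all_analysis.
From mathcomp Require Import ring zify.
Set Implicit Arguments. Unset Strict Implicit. Unset Printing Implicit Defensive.
Import Order.TTheory GRing.Theory Num.Theory.
Import numFieldNormedType.Exports.
Local Open Scope classical_set_scope.
Local Open Scope ring_scope.

(* Sending an edge threshold to +oo in the joint CDF deletes that edge, so the
   distribution of the edge weights determines the CDF of every subnetwork, and on
   trees this CDF factorises node by node.  For Q >= q_min the functions
   A_z := F_z^{Q+1}, with arguments allowed to be +oo, are linearly independent and
   equal 1 when all arguments are +oo.  Three stars hanging from a common node give
   the moments sum_z p_z A_z(x) A_z(y) A_z(u).  A dual functional of (A_z) applied
   in u writes p_c A_c(x) A_c(y) as a combination of the B_w(x) B_w(y); a dual
   functional of (B_w) applied in x then forces A_c = B_w for some w.  This gives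
   the relabeling sigma, and p' o sigma = p follows from the moments with u = +oo.
   Finally two adjacent nodes carrying one star each give
   sum_(a,b) p_a p_b F_ab(s) A_a(x) A_b(y), and independence of the products
   A_a(x) A_b(y) yields F' o (sigma, sigma) = F. *)

Lemma sum_delta (R : pzSemiRingType) (r : nat) (c : 'I_r) (g : 'I_r -> R) :
  \sum_(z < r) (z == c)%:R * g z = g c.
Proof. by under eq_bigr do rewrite mulr_natl mulrb; rewrite -big_mkcond big_pred1_eq. Qed.

Section LinearIndependence.
Variables (R : realType) (Y : Type).

Definition lin_indep (r : nat) (f : 'I_r -> Y -> R) :=
  forall c : 'I_r -> R, (forall y, \sum_(z < r) c z * f z y = 0) -> forall z, c z = 0.

Variables (r : nat) (f : 'I_r -> Y -> R).

Definition eval_row (y : Y) : 'rV[R]_r := \row_z f z y.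

Definition eval_mx k (ys : 'I_k -> Y) : 'M[R]_(k, r) := \matrix_(i, z) f z (ys i).

Lemma eval_mx_spanning :
  exists k (ys : 'I_k -> Y), forall y, (eval_row y <= eval_mx ys)%MS.
Proof.
pose has_rank (n : nat) := `[< exists k (ys : 'I_k -> Y), \rank (eval_mx ys) = n >].
have has_rank0 : has_rank 0%N.
  have ys0 : 'I_0 -> Y by case=> [[]].
  apply/asboolP; exists 0%N, ys0.
  by apply/eqP; rewrite -leqn0 rank_leq_row.
have rank_le_r (n : nat) : has_rank n -> (n <= r)%N.
  by move=> /asboolP [k [ys <-]]; exact: rank_leq_col.
have [n /asboolP [k [ys rk_ys]] rank_max] := ex_maxnP (ex_intro has_rank _ has_rank0) rank_le_r.
exists k, ys => y.
pose ys' (i : 'I_(k + 1)) := if fintype.split i is inl i' then ys i' else y.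
have ys'E : eval_mx ys' = col_mx (eval_mx ys) (eval_row y).
  by apply/matrixP => i z; rewrite !mxE /ys'; case: (fintype.split i) => i'; rewrite !mxE.
have rk_ys' : (\rank (eval_mx ys + eval_row y) <= \rank (eval_mx ys))%N.
  by rewrite (fst (addsmxE _ _)) -ys'E rk_ys; apply: rank_max; apply/asboolP; exists (k + 1)%N, ys'.
have [le_rk] := mxrank_leqif_sup (addsmxSl (eval_mx ys) (eval_row y)).
by rewrite eqn_leq le_rk rk_ys' addsmx_sub => /esym /andP [].
Qed.

Hypothesis f_indep : lin_indep f.

Lemma lin_indep_row_full k (ys : 'I_k -> Y) :
  (forall y, (eval_row y <= eval_mx ys)%MS) -> row_full (eval_mx ys).
Proof.
move=> spanning; rewrite -cokermx_eq0; apply/eqP/matrixP => z j; rewrite [RHS]mxE.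
suff /f_indep : forall y, \sum_(z' < r) cokermx (eval_mx ys) z' j * f z' y = 0 by [].
move=> y; have [D rowE] := submxP (spanning y).
have : (eval_row y *m cokermx (eval_mx ys)) 0 j = 0.
  by rewrite rowE -mulmxA mulmx_coker mulmx0 mxE.
rewrite mxE => rowE0; rewrite -[RHS]rowE0.
by apply: eq_bigr => z' _; rewrite mulrC !mxE.
Qed.

Lemma lin_indep_dual_basis (c : 'I_r) : exists k (ys : 'I_k -> Y) (lam : 'I_k -> R),
  forall G : 'I_r -> R, \sum_(i < k) lam i * \sum_(z < r) G z * f z (ys i) = G c.
Proof.
have [k [ys spanning]] := eval_mx_spanning.
have [D deltaE] := submxP (submx_full (delta_mx 0 c : 'rV[R]_r) (lin_indep_row_full spanning)).
have coordE z : \sum_(i < k) D 0 i * f z (ys i) = (z == c)%:R.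
  have := congr1 (fun A : 'rV[R]_r => A 0 z) deltaE; rewrite !mxE eqxx /= => ->.
  by apply: eq_bigr => i _; rewrite mxE.
exists k, ys, (D 0) => G.
transitivity (\sum_(z < r) G z * \sum_(i < k) D 0 i * f z (ys i)).
  under eq_bigr do rewrite mulr_sumr.
  rewrite exchange_big; apply: eq_bigr => z _; rewrite mulr_sumr.
  by apply: eq_bigr => i _; rewrite mulrCA.
under eq_bigr do rewrite coordE.
rewrite (bigD1 c) //= eqxx mulr1 big1 ?addr0 // => z /negbTE ->.
by rewrite mulr0.
Qed.

Lemma lin_indep_inj a b : f a =1 f b -> a = b.
Proof.
move=> fab; apply/eqP; apply: contraT => a_neq_b.
suff /f_indep /(_ a) : forall y, \sum_(z < r) ((z == a)%:R - (z == b)%:R) * f z y = 0.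
  by rewrite eqxx (negbTE a_neq_b) subr0 => /eqP; rewrite oner_eq0.
move=> y; under eq_bigr do rewrite mulrBl.
by rewrite sumrB !sum_delta fab subrr.
Qed.

Lemma lin_indep_tensor (c d : 'I_r -> 'I_r -> R) :
  (forall x y, \sum_(a < r) \sum_(b < r) c a b * (f a x * f b y) =
               \sum_(a < r) \sum_(b < r) d a b * (f a x * f b y)) ->
  forall a b, c a b = d a b.
Proof.
move=> cdE a b; apply/eqP; rewrite -subr_eq0; apply/eqP; move: b.
suff /f_indep : forall y, \sum_(b < r) (c a b - d a b) * f b y = 0 by [].
move=> y; move: a.
suff /f_indep : forall x, \sum_(a < r) (\sum_(b < r) (c a b - d a b) * f b y) * f a x = 0 by [].
move=> x; have /eqP := cdE x y; rewrite -subr_eq0 -sumrB => /eqP diffE.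
rewrite -[RHS]diffE; apply: eq_bigr => a _.
by rewrite -sumrB mulr_suml; apply: eq_bigr => b _; ring.
Qed.

Lemma lin_indep_diag (c d : 'I_r -> R) :
  (forall x y, \sum_(a < r) c a * (f a x * f a y) = \sum_(a < r) d a * (f a x * f a y)) ->
  c =1 d.
Proof.
move=> cdE a.
have := @lin_indep_tensor (fun a b => (b == a)%:R * c a) (fun a b => (b == a)%:R * d a) _ a a.
rewrite eqxx !mul1r; apply=> x y.
have diagE (e : 'I_r -> R) a' :
    \sum_(b < r) (b == a')%:R * e a' * (f a' x * f b y) = e a' * (f a' x * f a' y).
  by under eq_bigr do rewrite -mulrA; rewrite sum_delta.
by under eq_bigr do rewrite diagE; under [RHS]eq_bigr do rewrite diagE; exact: cdE.
Qed.

Lemma lin_indep_rank_one (bot : Y) (g : Y -> R) (a : R) (lam : 'I_r -> R) :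
  (forall z, f z bot = 1) -> g bot = 1 -> a != 0 ->
  (forall x y, a * (g x * g y) = \sum_(z < r) lam z * (f z x * f z y)) ->
  exists v, f v =1 g.
Proof.
move=> f_bot g_bot a_neq0 gE.
have sum_lam : a = \sum_(z < r) lam z.
  have := gE bot bot; rewrite g_bot !mulr1 => ->.
  by apply: eq_bigr => z _; rewrite !f_bot !mulr1.
have /existsP [v lam_v_neq0] : [exists v, lam v != 0].
  apply: contraNT a_neq0 => /existsPn lam0; rewrite sum_lam big1 // => z _.
  by apply/eqP; rewrite -[_ == _]negbK lam0.
have [k [us [mu muE]]] := lin_indep_dual_basis v.
pose psi := \sum_(j < k) mu j * g (us j).
have gvE y : a * psi * g y = lam v * f v y.
  rewrite -(muE (fun z => lam z * f z y)) mulr_sumr mulr_suml; apply: eq_bigr => j _.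
  transitivity (mu j * (a * (g (us j) * g y))); first by ring.
  by rewrite gE; congr (_ * _); apply: eq_bigr => z _; ring.
have psiE : a * psi = lam v by have := gvE bot; rewrite g_bot f_bot !mulr1.
by exists v => y; apply: (mulfI lam_v_neq0); rewrite -gvE psiE.
Qed.

End LinearIndependence.

Section TripleMoments.
Variables (R : realType) (Y : Type) (bot : Y).

Definition moment3 (r : nat) (p : 'I_r -> R) (A : 'I_r -> Y -> R) (x y u : Y) : R :=
  \sum_(z < r) p z * (A z x * A z y * A z u).

Variables (r r' : nat) (p : 'I_r -> R) (p' : 'I_r' -> R).
Variables (A : 'I_r -> Y -> R) (B : 'I_r' -> Y -> R).
Hypotheses (A_indep : lin_indep A) (B_indep : lin_indep B).
Hypotheses (A_bot : forall z, A z bot = 1) (B_bot : forall w, B w bot = 1).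
Hypothesis momentE : forall x y u, moment3 p A x y u = moment3 p' B x y u.

Lemma moment3_component (c : 'I_r) : 0 < p c -> exists v, B v =1 A c.
Proof.
move=> p_c_gt0; have [k [xs [lam lamE]]] := lin_indep_dual_basis A_indep c.
apply: (lin_indep_rank_one B_indep (bot := bot) (a := p c)
  (lam := fun w => p' w * \sum_(i < k) lam i * B w (xs i))) => //; first by rewrite gt_eqF.
move=> x y; rewrite -(lamE (fun z => p z * (A z x * A z y))).
transitivity (\sum_(i < k) lam i * moment3 p' B x y (xs i)).
  apply: eq_bigr => i _; rewrite -momentE; congr (_ * _).
  by apply: eq_bigr => z _; rewrite -mulrA.
under eq_bigr do rewrite mulr_sumr; rewrite exchange_big; apply: eq_bigr => w _.
by rewrite mulr_sumr mulr_suml; apply: eq_bigr => i _; ring.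
Qed.

End TripleMoments.

Lemma moment3_identify (R : realType) (Y : Type) (bot : Y) (r r' : nat)
    (p : 'I_r -> R) (p' : 'I_r' -> R) (A : 'I_r -> Y -> R) (B : 'I_r' -> Y -> R) :
  (forall z, 0 < p z) -> (forall w, 0 < p' w) -> lin_indep A -> lin_indep B ->
  (forall z, A z bot = 1) -> (forall w, B w bot = 1) ->
  (forall x y u, moment3 p A x y u = moment3 p' B x y u) ->
  exists sigma : 'I_r -> 'I_r',
    [/\ bijective sigma, forall z, p' (sigma z) = p z & forall z, B (sigma z) =1 A z].
Proof.
move=> p_gt0 p'_gt0 A_indep B_indep A_bot B_bot momentE.
have [sigma sigmaE] := fin_all_exists (fun z =>
  moment3_component A_indep B_indep A_bot B_bot momentE (p_gt0 z)).
have [tau tauE] := fin_all_exists (fun w =>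
  moment3_component B_indep A_indep B_bot A_bot (fun x y u => esym (momentE x y u)) (p'_gt0 w)).
have sigma_inj : injective sigma.
  by move=> a b ab; apply: (lin_indep_inj A_indep) => y; rewrite -!sigmaE ab.
have sigmaK : cancel tau sigma.
  by move=> w; apply: (lin_indep_inj B_indep) => y; rewrite sigmaE tauE.
have sigma_bij : bijective sigma by exists tau => // z; apply: sigma_inj; rewrite sigmaK.
exists sigma; split=> //; apply: (lin_indep_diag A_indep) => x y.
have := momentE x y bot; rewrite /moment3 (reindex sigma) /=; last exact: onW_bij.
under eq_bigr do rewrite A_bot mulr1.
by under [in RHS]eq_bigr do rewrite B_bot mulr1 !sigmaE; move=> ->.
Qed.

Definition ffun_rcons (T : Type) (n : nat) (z : {ffun 'I_n -> T}) (b : T) :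
    {ffun 'I_n.+1 -> T} :=
  [ffun i => if unlift ord_max i is Some j then z j else b].

Lemma widen_ord_max (n : nat) (i : 'I_n) : widen_ord (leqnSn n) i = lift ord_max i.
Proof. by apply: val_inj; rewrite /= /bump leqNgt ltn_ord. Qed.

Lemma ffun_rcons_widen (T : Type) (n : nat) (z : {ffun 'I_n -> T}) b (i : 'I_n) :
  ffun_rcons z b (widen_ord (leqnSn n) i) = z i.
Proof. by rewrite ffunE widen_ord_max liftK. Qed.

Lemma ffun_rcons_max (T : Type) (n : nat) (z : {ffun 'I_n -> T}) b :
  ffun_rcons z b ord_max = b.
Proof. by rewrite ffunE unlift_none. Qed.

Lemma sum_ffun_rcons (V : nmodType) (T : finType) (n : nat) (G : {ffun 'I_n.+1 -> T} -> V) :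
  \sum_(z : {ffun 'I_n.+1 -> T}) G z =
  \sum_(z : {ffun 'I_n -> T}) \sum_(b : T) G (ffun_rcons z b).
Proof.
rewrite pair_big (reindex (fun zb : {ffun 'I_n -> T} * T => ffun_rcons zb.1 zb.2)) //=.
apply: onW_bij.
exists (fun z : {ffun 'I_n.+1 -> T} => ([ffun j => z (widen_ord (leqnSn n) j)], z ord_max)).
  move=> [z b] /=; rewrite ffun_rcons_max; congr pair.
  by apply/ffunP => j; rewrite ffunE ffun_rcons_widen.
move=> z; apply/ffunP => i; rewrite ffunE.
by case: unliftP => [j ->|->] //; rewrite ffunE widen_ord_max.
Qed.

Section NetworkSums.
Variables (R : realType) (r : nat).
Implicit Types (w : nat -> 'I_r -> R) (K : nat -> nat -> 'I_r -> 'I_r -> R).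

(* The CDF of an n-node network in which node i has community weights [w i] and
   edge i < j contributes [K i j]; [edge_cdf p F x] is convertible to
   [netsum n (fun _ => p) (fun i j a b => F a b (x i j))].  Nodes are indexed by nat
   so that networks of all sizes share [w] and [K]. *)
Definition netsum n w K : R :=
  \sum_(z : {ffun 'I_n -> 'I_r})
     ((\prod_(i < n) w i (z i)) * \prod_(i < n) \prod_(j < n | (i < j)%N) K i j (z i) (z j)).

Definition scale_node w (m : nat) (g : 'I_r -> R) : nat -> 'I_r -> R :=
  fun i a => if i == m then w i a * g a else w i a.

Lemma scale_node_id w m g (i : nat) : i != m -> scale_node w m g i = w i.
Proof. by rewrite /scale_node => /negbTE ->. Qed.

Lemma eq_netsum n w1 w2 K1 K2 :
  (forall i, (i < n)%N -> w1 i =1 w2 i) ->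
  (forall i j, (i < j < n)%N -> K1 i j =2 K2 i j) ->
  netsum n w1 K1 = netsum n w2 K2.
Proof.
move=> wE KE; apply: eq_bigr => z _; congr (_ * _).
  by apply: eq_bigr => i _; rewrite wE.
by apply: eq_bigr => i _; apply: eq_bigr => j ij; rewrite KE // ij ltn_ord.
Qed.

Lemma prod_scale_node n w m g (z : 'I_n -> 'I_r) (m_lt_n : (m < n)%N) :
  \prod_(i < n) scale_node w m g i (z i) =
  (\prod_(i < n) w i (z i)) * g (z (Ordinal m_lt_n)).
Proof.
rewrite (eq_bigr (fun i : 'I_n => w i (z i) * (if i == m :> nat then g (z i) else 1))); last first.
  by move=> i _; rewrite /scale_node; case: eqP; rewrite ?mulr1.
rewrite big_split /=; congr (_ * _).
rewrite (bigD1 (Ordinal m_lt_n)) //= eqxx big1 ?mulr1 // => i i_neq_m.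
by rewrite ifN //; apply: contra i_neq_m => /eqP i_eq_m; apply/eqP/val_inj.
Qed.

Lemma prod_edges_rcons n K (z : {ffun 'I_n -> 'I_r}) b :
  \prod_(i < n.+1) \prod_(j < n.+1 | (i < j)%N) K i j (ffun_rcons z b i) (ffun_rcons z b j) =
  (\prod_(i < n) \prod_(j < n | (i < j)%N) K i j (z i) (z j)) * \prod_(i < n) K i n (z i) b.
Proof.
rewrite big_ord_recr /= [X in _ * X]big1 ?mulr1 => [|j]; last by rewrite ltnNge -ltnS ltn_ord.
rewrite -big_split /=; apply: eq_bigr => i _.
rewrite big_mkcond big_ord_recr /= ltn_ord ffun_rcons_max !ffun_rcons_widen -big_mkcond /=.
by congr (_ * _); apply: eq_bigr => j _; rewrite !ffun_rcons_widen.
Qed.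

Lemma netsum_leaf n w K m : (m < n)%N ->
  (forall i, (i < n)%N -> i != m -> K i n =2 (fun _ _ => 1)) ->
  netsum n.+1 w K = netsum n (scale_node w m (fun a => \sum_(b < r) w n b * K m n a b)) K.
Proof.
move=> m_lt_n leaf; rewrite /netsum sum_ffun_rcons; apply: eq_bigr => z _.
have edgeE b : \prod_(i < n) K i n (z i) b = K m n (z (Ordinal m_lt_n)) b.
  rewrite (bigD1 (Ordinal m_lt_n)) //= big1 ?mulr1 // => i i_neq_m.
  by apply: leaf => //; apply: contra i_neq_m => /eqP i_eq_m; apply/eqP/val_inj.
under eq_bigr do rewrite prod_edges_rcons edgeE big_ord_recr /= ffun_rcons_max.
under eq_bigr do under eq_bigr do rewrite ffun_rcons_widen.
rewrite prod_scale_node mulrAC mulr_sumr; apply: eq_bigr => b _; ring.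
Qed.

Lemma netsum1 w K : netsum 1 w K = \sum_(a < r) w 0%N a.
Proof.
rewrite /netsum (reindex (fun a : 'I_r => [ffun _ : 'I_1 => a])) /=; last first.
  apply: onW_bij; exists (fun z : {ffun 'I_1 -> 'I_r} => z ord0) => [a|z]; first by rewrite ffunE.
  by apply/ffunP => i; rewrite !ffunE (ord1 i).
apply: eq_bigr => a _; rewrite !big_ord1 big1 ?mulr1 ?ffunE // => j.
by rewrite (ord1 j).
Qed.

Lemma netsum_leaves m Q w K :
  (forall l, (l < Q)%N -> forall i, (i < m.+1 + l)%N -> i != m ->
     K i (m.+1 + l)%N =2 (fun _ _ => 1)) ->
  netsum (m.+1 + Q) w K =
  netsum m.+1 (scale_node w m (fun b =>
    \prod_(l < Q) \sum_(c < r) w (m.+1 + l)%N c * K m (m.+1 + l)%N b c)) K.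
Proof.
elim: Q w => [|Q IH] w leaves.
  by rewrite addn0; apply: eq_netsum => // i _ a; rewrite /scale_node big_ord0 mulr1 if_same.
rewrite addnS (@netsum_leaf _ _ _ m); last 2 first.
- by rewrite ltnS leq_addr.
- by move=> i i_lt i_neq_m; apply: leaves.
rewrite IH => [|l l_lt_Q]; last by apply: leaves; apply: ltnW.
apply: eq_netsum => // i _ a; rewrite /scale_node; case: eqP => [->|//].
rewrite big_ord_recr /= -mulrA [X in _ * X]mulrC; congr (_ * (_ * _)).
by apply: eq_bigr => l _; apply: eq_bigr => c _; rewrite gtn_eqF // addSn ltnS leq_addr.
Qed.

Lemma netsum_star m Q pi w K : (pi < m)%N ->
  (forall i, (i < m)%N -> i != pi -> K i m =2 (fun _ _ => 1)) ->
  (forall l, (l < Q)%N -> forall i, (i < m.+1 + l)%N -> i != m ->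
     K i (m.+1 + l)%N =2 (fun _ _ => 1)) ->
  netsum (m.+1 + Q) w K =
  netsum m (scale_node w pi (fun a => \sum_(b < r) w m b * K pi m a b *
    \prod_(l < Q) \sum_(c < r) w (m.+1 + l)%N c * K m (m.+1 + l)%N b c)) K.
Proof.
move=> pi_lt_m hub leaves; rewrite netsum_leaves // (@netsum_leaf _ _ _ pi) //.
apply: eq_netsum => // i i_lt_m a; rewrite /scale_node eqxx (ltn_eqF i_lt_m).
by case: eqP => // _; congr (_ * _); apply: eq_bigr => b _; rewrite mulrAC.
Qed.

Lemma cvg_netsum n w (Ks : R -> nat -> nat -> 'I_r -> 'I_r -> R) K :
  (forall i j a b, Ks s i j a b @[s --> +oo] --> K i j a b) ->
  netsum n w (Ks s) @[s --> +oo] --> netsum n w K.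
Proof.
move=> KsK; apply: cvg_big => [|z _]; first exact: add_continuous.
apply: cvgM; first exact: cvg_cst.
apply: cvg_big => [|i _]; first exact: mul_continuous.
by apply: cvg_big => [|j _]; [exact: mul_continuous | exact: KsK].
Qed.

End NetworkSums.

Section ProbeNetworks.
Variables (R : realType) (r : nat) (p : 'I_r -> R) (F : 'I_r -> 'I_r -> R -> R).

(* [None] is the threshold +oo, i.e. the edge is deleted. *)
Definition Fopt (a b : 'I_r) (o : option R) : R := if o is Some v then F a b v else 1.

(* The paper's F_a^{Q+1}(y 0, ..., y Q), with arguments [None] standing for +oo. *)
Definition star_cdf (Q : nat) (a : 'I_r) (y : nat -> option R) : R :=
  \sum_(c < r) p c * Fopt a c (y 0%N) * \prod_(l < Q) \sum_(d < r) p d * Fopt c d (y l.+1).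

Definition edge_kernel (x : nat -> nat -> option R) (i j : nat) (a b : 'I_r) : R :=
  Fopt a b (x i j).

Lemma Fq_star_cdf q' (z : 'I_r) (x : 'I_q'.+1 -> R) :
  Fq p F z x = star_cdf q' z (fun k => Some (x (inord k))).
Proof.
pose w i a := if i == 0%N then p a * F z a (x ord0) else p a.
pose K i j a b := if i == 0%N then F a b (x (inord j)) else 1.
have -> : Fq p F z x = netsum (0.+1 + q') w K.
  apply: eq_bigr => zz _; rewrite !big_ord_recl /= [X in _ = _ * (_ * X)]big1 ?mulr1; last first.
    by move=> i _; rewrite big1.
  rewrite /w /= -!mulrA; congr (_ * _); rewrite mulrCA; congr (_ * (_ * _)).
  by apply: eq_bigr => j _; rewrite /K /= inord_val.
rewrite netsum_leaves => [|l _ i _ /negbTE i_neq0 a b]; last by rewrite /K i_neq0.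
rewrite netsum1; apply: eq_bigr => a _.
by rewrite /scale_node /w /= (_ : inord 0 = ord0) //; apply: val_inj; rewrite /= inordK.
Qed.

Definition attach_star (x : nat -> nat -> option R) (m pi : nat) (y : nat -> option R) :
    nat -> nat -> option R :=
  fun i j => if j == m then (if i == pi then y 0%N else None)
             else if (m < j)%N then (if i == m then y (j - m)%N else None)
             else x i j.

Lemma netsum_attach_star x m pi Q y w : (pi < m)%N -> (forall j, (m <= j)%N -> w j =1 p) ->
  netsum (m.+1 + Q) w (edge_kernel (attach_star x m pi y)) =
  netsum m (scale_node w pi (fun a => star_cdf Q a y)) (edge_kernel x).
Proof.
rewrite /edge_kernel /attach_star => pi_lt_m w_p; rewrite (netsum_star _ pi_lt_m); last 2 first.
- by move=> i _ /negbTE i_neq_pi a b; rewrite eqxx i_neq_pi.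
- move=> l _ i _ /negbTE i_neq_m a b.
  by rewrite gtn_eqF ?i_neq_m ?addSn ?ltnS ?leq_addr.
apply: eq_netsum => [i _ a|i j /andP [_ j_lt_m] a b]; last first.
  by rewrite ltn_eqF // ltnNge ltnW.
rewrite /scale_node /star_cdf; case: eqP => // _; congr (_ * _); apply: eq_bigr => b _.
rewrite w_p // !eqxx; congr (_ * _); apply: eq_bigr => l _; apply: eq_bigr => c _.
rewrite w_p; last lia.
rewrite ifF; last lia.
rewrite ifT; last lia.
by rewrite (_ : m.+1 + l - m = l.+1)%N; last lia.
Qed.

(* Nodes 0 and 1 are joined with threshold [t]; star b (hub 2 + b (Q + 1) followed
   by its Q leaves) hangs from node 0 for b < 3 and from node 1 for b = 3. *)
Definition probe_graph (Q : nat) (t : option R) (y0 y1 y2 y3 : nat -> option R) :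
    nat -> nat -> option R :=
  let hub b := (2 + b * Q.+1)%N in
  attach_star (attach_star (attach_star (attach_star (fun _ _ => t)
    (hub 0%N) 0 y0) (hub 1%N) 0 y1) (hub 2%N) 0 y2) (hub 3%N) 1 y3.

Definition probe (Q : nat) (t : option R) (y0 y1 y2 y3 : nat -> option R) : R :=
  \sum_(a < r) \sum_(b < r) (p a * p b * Fopt a b t) *
    (star_cdf Q a y0 * star_cdf Q a y1 * star_cdf Q a y2 * star_cdf Q b y3).

Lemma netsum_probe_graph Q t y0 y1 y2 y3 :
  netsum (2 + 4 * Q.+1) (fun _ => p) (edge_kernel (probe_graph Q t y0 y1 y2 y3)) =
  probe Q t y0 y1 y2 y3.
Proof.
have hubS b : (2 + b.+1 * Q.+1 = (2 + b * Q.+1).+1 + Q)%N by lia.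
rewrite /probe_graph hubS netsum_attach_star //.
rewrite hubS netsum_attach_star //; last by move=> j j_ge a; rewrite scale_node_id //; lia.
rewrite hubS netsum_attach_star //; last by move=> j j_ge a; rewrite !scale_node_id //; lia.
rewrite hubS netsum_attach_star //; last by move=> j j_ge a; rewrite !scale_node_id //; lia.
rewrite mul0n addn0 (@netsum_leaf _ _ 1 _ _ 0) //; last by case.
rewrite netsum1 /scale_node /edge_kernel /=; apply: eq_bigr => a _.
by rewrite mulr_sumr; apply: eq_bigr => b _; ring.
Qed.

Lemma cvg_probe Q t y0 y1 y2 y3 : (forall a b, is_cdf (F a b)) ->
  edge_cdf p F (fun i j : 'I_(2 + 4 * Q.+1) => odflt s (probe_graph Q t y0 y1 y2 y3 i j))
    @[s --> +oo] --> probe Q t y0 y1 y2 y3.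
Proof.
move=> F_cdf; rewrite -netsum_probe_graph.
apply: (cvg_netsum (Ks := fun s i j a b => F a b (odflt s (probe_graph Q t y0 y1 y2 y3 i j)))).
move=> i j a b; rewrite /edge_kernel.
by case: probe_graph => [v|] /=; [exact: cvg_cst | case: (F_cdf a b)].
Qed.

Hypothesis p_sum1 : \sum_(c < r) p c = 1.

Lemma star_cdf_none Q a : star_cdf Q a (fun _ => None) = 1.
Proof.
rewrite -[RHS]p_sum1; apply: eq_bigr => c _; rewrite mulr1 big1 ?mulr1 // => l _.
by rewrite -[RHS]p_sum1; apply: eq_bigr => d _; rewrite mulr1.
Qed.

Lemma star_cdf_lin_indep q' Q :
  (q' <= Q)%N -> Fq_lin_indep p F q' -> lin_indep (star_cdf Q).
Proof.
move=> q'_le_Q Fq_indep c starE; apply: Fq_indep => x.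
rewrite -[RHS](starE (fun k => if (k <= q')%N then Some (x (inord k)) else None)).
apply: eq_bigr => z _; rewrite Fq_star_cdf; congr (_ * _); apply: eq_bigr => c' _.
rewrite -(subnKC q'_le_Q) big_split_ord /= [X in _ = _ * (_ * X)]big1 ?mulr1.
  by congr (_ * _); apply: eq_bigr => l _; rewrite ltn_ord.
move=> l _; rewrite -[RHS]p_sum1; apply: eq_bigr => d _.
by rewrite leqNgt ltnS leq_addr /= mulr1.
Qed.

Lemma probe_moment3 Q y0 y1 y2 :
  probe Q None y0 y1 y2 (fun _ => None) = moment3 p (star_cdf Q) y0 y1 y2.
Proof.
apply: eq_bigr => a _.
transitivity (\sum_(b < r) p b * (p a * (star_cdf Q a y0 * star_cdf Q a y1 * star_cdf Q a y2))).
  by apply: eq_bigr => b _; rewrite star_cdf_none /=; ring.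
by rewrite -mulr_suml p_sum1 mul1r.
Qed.

Lemma probe_edge Q s y0 y3 :
  probe Q (Some s) y0 (fun _ => None) (fun _ => None) y3 =
  \sum_(a < r) \sum_(b < r) (p a * p b * F a b s) * (star_cdf Q a y0 * star_cdf Q b y3).
Proof.
by apply: eq_bigr => a _; apply: eq_bigr => b _; rewrite !star_cdf_none !mulr1.
Qed.

End ProbeNetworks.

Unset Implicit Arguments.
Local Close Scope classical_set_scope.

Theorem proposition1 (R : realType)
    (r : nat) (p : 'I_r -> R) (F : 'I_r -> 'I_r -> R -> R)
    (r' : nat) (p' : 'I_r' -> R) (F' : 'I_r' -> 'I_r' -> R -> R) :
  wsbm_assumptions p F ->
  wsbm_assumptions p' F' ->
  (forall (n : nat) (x : 'I_n -> 'I_n -> R), edge_cdf p F x = edge_cdf p' F' x) ->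
  r = r' /\
  exists sigma : 'I_r -> 'I_r',
    [/\ bijective sigma,
        (forall z, p' (sigma z) = p z) &
        (forall z1 z2, F' (sigma z1) (sigma z2) = F z1 z2)].
Proof.
move=> [[p_gt0 p_sum1 F_cdf _] [q1 Fq1_indep]] [[p'_gt0 p'_sum1 F'_cdf _] [q2 Fq2_indep]] cdfE.
pose Q := maxn q1 q2.
have A_indep := star_cdf_lin_indep p_sum1 (leq_maxl q1 q2) Fq1_indep.
have B_indep := star_cdf_lin_indep p'_sum1 (leq_maxr q1 q2) Fq2_indep.
have probeE t y0 y1 y2 y3 : probe p F Q t y0 y1 y2 y3 = probe p' F' Q t y0 y1 y2 y3.
  apply: (cvg_unique (@Rhausdorff R) (cvg_probe F_cdf)) => /=.
  by under eq_cvg do rewrite cdfE; exact: cvg_probe.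
have momentE x y u : moment3 p (star_cdf p F Q) x y u = moment3 p' (star_cdf p' F' Q) x y u.
  by rewrite -!probe_moment3 // probeE.
have [sigma [sigma_bij p'_sigma B_sigma]] := moment3_identify p_gt0 p'_gt0 A_indep B_indep
  (star_cdf_none F p_sum1 Q) (star_cdf_none F' p'_sum1 Q) momentE.
split; first by have := bij_eq_card sigma_bij; rewrite !card_ord.
exists sigma; split => // a b; apply/funext => s.
have pab_neq0 : p a * p b != 0 by rewrite mulf_neq0 ?lt0r_neq0.
apply/esym/(mulfI pab_neq0).
apply: (lin_indep_tensor A_indep (c := fun a b => p a * p b * F a b s)
  (d := fun a b => p a * p b * F' (sigma a) (sigma b) s)) => y0 y3.
rewrite -probe_edge // probeE probe_edge // (reindex sigma) /=; last exact: onW_bij.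
apply: eq_bigr => a' _; rewrite (reindex sigma) /=; last exact: onW_bij.
by apply: eq_bigr => b' _; rewrite !p'_sigma !B_sigma.
Qed.
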